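(* Consider the sequences $(x_k),(y_k),(\nu_k),(\lambda_k)$ generated by Algorithm 2 (described in the context), and assume that at iteration $k\ge1$ the pair $(y_k,\nu_k)$ is computed in the approximate-solution branch, so that $\nu_k\in N_C(y_k)$ and $\|\lambda_k(F_{y_{k-1}}(y_k)+\nu_k)+y_k-x_{k-1}\|\le\hat\sigma\|y_k-y_{k-1}\|$. Then $$\frac{\lambda_kL}{2}\big\|\lambda_k(F(y_{k-1})+\nu_{k-1})+y_{k-1}-x_{k-1}\big\|\le\theta\ \Longrightarrow\ \frac{\lambda_kL}{2}\big\|\lambda_k(F(y_k)+\nu_k)+y_k-x_{k-1}\big\|\le\hat\theta.$$
   Context: Setting: $\mathcal H$ real Hilbert space; $C\subseteq\mathcal H$ nonempty closed convex; $N_C(x)=\{\nu:\langle\nu,y-x\rangle\le0\ \forall y\in C\}$ if $x\in C$, $N_C(x)=\emptyset$ otherwise. $F:C\to\mathcal H$ is monotone, continuously differentiable, and $\|F'(x)-F'(y)\|\le L\|x-y\|$ for all $x,y\in C$, with $L>0$; the set of $x$ with $0\in F(x)+N_C(x)$ is nonempty. For $y\in C$, $F_y(x):=F(y)+F'(y)(x-y)$. Parameters: $0\le\hat\sigma<1/2$; $0<\theta<(1-\hat\sigma)(1-2\hat\sigma)$; $\hat\theta:=\theta\big(\frac{\hat\sigma}{1-\hat\sigma}+\frac{\theta}{(1-\hat\sigma)^2}\big)$; $\eta>2\hat\theta/L$; $\tau:=\dfrac{2(\theta-\hat\theta)}{2\theta+\frac{\eta L}{2}+\sqrt{(2\theta+\frac{\eta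 L}{2})^2-4\theta(\theta-\hat\theta)}}$. Algorithm 2: input $x_0\in C$, $y_0:=x_0$, $\nu_0:=0$, $\lambda_1>0$ with $\lambda_1^2\|F(y_0)\|\le2\theta/L$. For $k=1,2,\dots$: if $F(y_{k-1})+\nu_{k-1}=0$, stop and return $y_{k-1}$. If $\frac{\lambda_kL}{2}\|\lambda_k(F(y_{k-1})+\nu_{k-1})+y_{k-1}-x_{k-1}\|\le\hat\theta$, set $y_k=y_{k-1}$, $\nu_k=\nu_{k-1}$; otherwise (approximate-solution branch) find any $(y_k,\nu_k)$ with $\nu_k\in N_C(y_k)$ and $\|\lambda_k(F_{y_{k-1}}(y_k)+\nu_k)+y_k-x_{k-1}\|\le\hat\sigma\|y_k-y_{k-1}\|$. Then, if $\lambda_k\|y_k-x_{k-1}\|\ge\eta$, set $x_k=x_{k-1}-\tau\lambda_k(F(y_k)+\nu_k)$ and $\lambda_{k+1}=(1-\tau)\lambda_k$; else set $x_k=x_{k-1}$ and $\lambda_{k+1}=\lambda_k/(1-\tau)$. Standing assumption: the algorithm never stops at the first test, i.e. $F(y_{k-1})+\nu_{k-1}\neq0$ for all $k$. *)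

(* R : realType, H a complete normed space whose
   norm comes from an inner product (i.e. a real Hilbert space). *)
From HB Require Import structures.
From mathcomp Require Import all_boot all_order all_algebra.
From mathcomp Require Import all_classical all_reals all_analysis.
Set Implicit Arguments. Unset Strict Implicit. Unset Printing Implicit Defensive.
Import Order.TTheory GRing.Theory Num.Theory.
Import numFieldNormedType.Exports.
Local Open Scope classical_set_scope.
Local Open Scope ring_scope.

Section Defs.
Variables (R : realType) (H : completeNormedModType R).

Definition is_inner_product (ip : H -> H -> R) : Prop :=
  [/\ (forall x y, ip x y = ip y x),
      (forall a x y z, ip (a *: x + y) z = a * ip x z + ip y z) &
      (forall x, `|x| ^+ 2 = ip x x)].

Definition in_normal_cone (ip : H -> H -> R) (C : set H) (x nu : H) : Prop :=
  C x /\ forall y, C y -> ip nu (y - x) <= 0.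

Definition monotone_on (ip : H -> H -> R) (C : set H) (F : H -> H) : Prop :=
  forall x y, C x -> C y -> 0 <= ip (F x - F y) (x - y).

Definition derivative_on (C : set H) (F : H -> H) (F' : H -> H -> H) : Prop :=
  forall y, C y ->
    [/\ (forall a u v, F' y (a *: u + v) = a *: F' y u + F' y v),
        continuous (F' y) &
        (forall eps : R, 0 < eps -> exists2 delta : R, 0 < delta &
           forall x, C x -> `|x - y| < delta ->
             `|F x - F y - F' y (x - y)| <= eps * `|x - y|)].

(* ||F'(x) - F'(y)||_op <= L ||x - y||, operator norm unfolded *)
Definition deriv_lipschitz_on (C : set H) (F' : H -> H -> H) (L : R) : Prop :=
  forall x y, C x -> C y -> forall v,
    `|F' x v - F' y v| <= L * `|x - y| * `|v|.

(* continuity of y |-> F'(y) in operator norm on C *)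
Definition deriv_continuous_on (C : set H) (F' : H -> H -> H) : Prop :=
  forall y, C y -> forall eps : R, 0 < eps -> exists2 delta : R, 0 < delta &
    forall x, C x -> `|x - y| < delta -> forall v,
      `|F' x v - F' y v| <= eps * `|v|.

Definition theta_hat (sigma_hat theta : R) : R :=
  theta * (sigma_hat / (1 - sigma_hat) + theta / (1 - sigma_hat) ^+ 2).

Definition tau_param (sigma_hat theta eta L : R) : R :=
  let th := theta_hat sigma_hat theta in
  let b := 2 * theta + eta * L / 2 in
  (2 * (theta - th)) / (b + Num.sqrt (b ^+ 2 - 4 * theta * (theta - th))).

Definition linF (F : H -> H) (F' : H -> H -> H) (y x : H) : H :=
  F y + F' y (x - y).

Definition algorithm2 (ip : H -> H -> R) (C : set H) (F : H -> H)
  (F' : H -> H -> H) (L sigma_hat theta eta : R)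
  (x y nu : nat -> H) (lam : nat -> R) : Prop :=
  let th := theta_hat sigma_hat theta in
  let tau := tau_param sigma_hat theta eta L in
  [/\ C (x 0%N) /\ y 0%N = x 0%N /\ nu 0%N = 0 /\ 0 < lam 1%N /\
      lam 1%N ^+ 2 * `|F (y 0%N)| <= 2 * theta / L,
      (* standing assumption: no stop *)
      (forall k, (1 <= k)%N -> F (y k.-1) + nu k.-1 != 0),
      (forall k, (1 <= k)%N ->
        if lam k * L / 2 * `|lam k *: (F (y k.-1) + nu k.-1) + y k.-1 - x k.-1|
             <= th
        then y k = y k.-1 /\ nu k = nu k.-1
        else in_normal_cone ip C (y k) (nu k) /\
             `|lam k *: (linF F F' (y k.-1) (y k) + nu k) + y k - x k.-1|
               <= sigma_hat * `|y k - y k.-1|) &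
      (forall k, (1 <= k)%N ->
        if eta <= lam k * `|y k - x k.-1|
        then x k = x k.-1 - (tau * lam k) *: (F (y k) + nu k) /\
             lam k.+1 = (1 - tau) * lam k
        else x k = x k.-1 /\ lam k.+1 = lam k / (1 - tau))].

End Defs.

(* Write h := y_k - y_{k-1}.  Comparing the approximate-solution inequality
   with the residual of step k-1, the monotonicity of the normal cone and the
   positive semidefiniteness of F'(y_{k-1}) (a consequence of the monotonicity
   of F) give (1 - sigma_hat) |h| <= |lambda_k (F(y_{k-1}) + nu_{k-1}) + y_{k-1}
   - x_{k-1}|.  The Lipschitz continuity of F' bounds the linearisation error
   |F(y_k) - F_{y_{k-1}}(y_k)| by L/2 |h|^2, so with p := lambda_k L |h| / 2
   the new residual, scaled by lambda_k L / 2, is at most sigma_hat p + p^2,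
   and p <= theta / (1 - sigma_hat) turns this into theta_hat.  As F is only
   differentiable relative to C, the quadratic bound is obtained by real
   induction along the segment [y_{k-1}, y_k]. *)

From HB Require Import structures.
From mathcomp Require Import all_boot all_order all_algebra.
From mathcomp Require Import all_classical all_reals all_analysis.
From mathcomp Require Import ring lra.
Import Order.TTheory GRing.Theory Num.Theory.
Import numFieldNormedType.Exports.
Local Open Scope classical_set_scope.
Local Open Scope ring_scope.

Section InnerProduct.
Context {R : realType} {H : completeNormedModType R} {ip : H -> H -> R}.
Hypothesis hip : is_inner_product ip.

Lemma ipC a b : ip a b = ip b a.
Proof. by case: hip. Qed.

Lemma ipDl a b c : ip (a + b) c = ip a c + ip b c.
Proof.
by case: hip => _ lin _; have := lin 1 a b c; rewrite scale1r mul1r.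
Qed.

Lemma ip0l c : ip 0 c = 0.
Proof. by apply: (addrI (ip 0 c)); rewrite -ipDl !addr0. Qed.

Lemma ipZl k a c : ip (k *: a) c = k * ip a c.
Proof.
by case: hip => _ lin _; have := lin k a 0 c; rewrite addr0 ip0l addr0.
Qed.

Lemma ipNl a c : ip (- a) c = - ip a c.
Proof. by rewrite -scaleN1r ipZl mulN1r. Qed.

Lemma ipBl a b c : ip (a - b) c = ip a c - ip b c.
Proof. by rewrite ipDl ipNl. Qed.

Lemma ipZr k a c : ip c (k *: a) = k * ip c a.
Proof. by rewrite ipC ipZl ipC. Qed.

Lemma ipNr a c : ip c (- a) = - ip c a.
Proof. by rewrite ipC ipNl ipC. Qed.

Lemma ip_normE a : ip a a = `|a| ^+ 2.
Proof. by case: hip. Qed.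

Lemma ip_le_normM a b : ip a b <= `|a| * `|b|.
Proof.
have sqrD : `|a + b| ^+ 2 = `|a| ^+ 2 + 2 * ip a b + `|b| ^+ 2.
  by rewrite -!ip_normE ipDl !(ipC _ (a + b)) !ipDl (ipC b a); ring.
have : `|a + b| ^+ 2 <= (`|a| + `|b|) ^+ 2.
  by rewrite lerXn2r ?nnegrE ?addr_ge0 ?ler_normD.
by rewrite sqrD; lra.
Qed.

End InnerProduct.

Lemma le01_of_local_slope (R : realType) (a : R -> R) :
  (forall t, 0 <= t -> t <= 1 -> forall e, 0 < e -> exists2 d, 0 < d &
     forall s, 0 <= s -> s <= 1 -> `|s - t| < d ->
       (t <= s -> a s <= a t + e * (s - t)) /\
       (s <= t -> a t <= a s + e * (t - s))) ->
  a 1 <= a 0.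
Proof.
move=> slope; apply/ler_addgt0Pr => e e0.
pose S := [set t : R | [/\ 0 <= t, t <= 1 &
                         forall u, 0 <= u -> u <= t -> a u <= a 0 + e * u]].
have S0 : S 0.
  split=> // u u0 u_le0.
  by rewrite (@le_anti _ _ u 0) ?u0 ?u_le0 // mulr0 addr0.
have supS : has_sup S by split; [exists 0 | exists 1 => t []].
pose c := sup S.
have c0 : 0 <= c by apply: sup_upper_bound.
have c1 : c <= 1 by apply: ge_sup; [exists 0 | move=> t []].
have below_c u : 0 <= u -> u < c -> a u <= a 0 + e * u.
  move=> u0 uc; have cu0 : 0 < c - u by rewrite subr_gt0.
  have [t [_ _ St] ut] := sup_adherent cu0 supS.
  by apply: St => //; rewrite -/c in ut; lra.
have [d d0 near_c] := slope c c0 c1 e e0.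
have Sc : S c.
  split=> // u u0 uc; have [u_lt_c | u_ge_c] := ltP u c; first exact: below_c.
  rewrite (@le_anti _ _ u c) ?uc ?u_ge_c //.
  have [->|c_gt0] := eqVneq c 0; first by rewrite mulr0 addr0.
  pose v := Num.max 0 (c - d / 2).
  have v0 : 0 <= v by rewrite le_max lexx.
  have vc : v < c by rewrite gt_max lt_neqAle eq_sym c_gt0 c0 /=; lra.
  have v1 : v <= 1 by lra.
  have vc_d : `|v - c| < d.
    have : c - d / 2 <= v by rewrite le_max lexx orbT.
    by rewrite ler0_norm ?subr_le0 ?(ltW vc) //; lra.
  have [_ /(_ (ltW vc))] := near_c v v0 v1 vc_d.
  have := below_c v v0 vc; lra.
have c_eq1 : c = 1.
  apply/eqP; rewrite eq_le c1 /=; rewrite leNgt; apply/negP => c_lt1.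
  pose w := Num.min 1 (c + d / 2).
  have w1 : w <= 1 by rewrite ge_min lexx.
  have cw : c < w by rewrite lt_min c_lt1 /=; lra.
  have w_near : w <= c + d / 2 by rewrite ge_min lexx orbT.
  have Sw : S w.
    split=> [|//|u u0 uw]; first lra.
    have [uc | cu] := leP u c; first by case: Sc => _ _; apply.
    have u1 : u <= 1 by lra.
    have uc_d : `|u - c| < d by rewrite ger0_norm ?subr_ge0 ?(ltW cu) //; lra.
    have [/(_ (ltW cu)) + _] := near_c u u0 u1 uc_d.
    by case: Sc => _ _ /(_ c c0 (lexx c)); lra.
  by have := sup_upper_bound supS Sw; rewrite -/c; lra.
by case: Sc => _ _ /(_ 1 ler01); rewrite c_eq1 mulr1; apply.
Qed.

Lemma first_order_remainder_le (R : realType) (V : normedModType R)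
    (phi psi : R -> V) (M : R) :
  (forall t, 0 <= t -> t <= 1 -> forall e, 0 < e -> exists2 d, 0 < d &
     forall s, 0 <= s -> s <= 1 -> `|s - t| < d ->
       `|phi s - phi t - (s - t) *: psi t| <= e * `|s - t|) ->
  (forall t, 0 <= t -> t <= 1 -> `|psi t - psi 0| <= M * t) ->
  `|phi 1 - phi 0 - psi 0| <= M / 2.
Proof.
move=> deriv psi_lip.
have M0 : 0 <= M.
  by rewrite -[M]mulr1; apply: le_trans (psi_lip 1 ler01 (lexx 1)).
pose w t := phi t - t *: psi 0.
pose a t := `|w t - w 0| - M / 2 * t ^+ 2.
suff : a 1 <= a 0.
  rewrite /a /w subrr normr0 scale1r scale0r subr0 addrAC expr1n expr0n /=.
  lra.
apply: le01_of_local_slope => t t0 t1 e e0.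
have e2 : 0 < e / 2 by lra.
have [d1 d1_gt0 near_t] := deriv t t0 t1 _ e2.
have M1 : 0 < M + 1 by lra.
exists (Num.min d1 (e / (M + 1))); first by rewrite lt_min d1_gt0 divr_gt0.
move=> s s0 s1; rewrite lt_min => /andP[st_d1 st_eM].
have step : `|w s - w t| <= `|s - t| * (M * t + e / 2).
  have -> : w s - w t
            = phi s - phi t - (s - t) *: psi t + (s - t) *: (psi t - psi 0).
    rewrite /w scalerBr addrA subrK scalerBl !opprB.
    by rewrite addrACA [RHS]addrACA (addrC (- phi t)).
  apply: le_trans (ler_normD _ _) _; rewrite normrZ.
  have := near_t s s0 s1 st_d1; have := psi_lip t t0 t1.
  have := normr_ge0 (s - t); nra.
have MsT : M * `|s - t| <= e.
  move: st_eM; rewrite ltr_pdivlMr // mulrDr mulr1 mulrC.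
  by have := normr_ge0 (s - t); lra.
rewrite /a; split=> [ts | st].
- have := ler_distD (w t) (w s) (w 0).
  move: step; rewrite ger0_norm ?subr_ge0 // => step.
  have := mulr_ge0 M0 (sqr_ge0 (s - t)).
  have : 0 <= e * (s - t) by apply: mulr_ge0; rewrite ?subr_ge0 // ltW.
  nra.
- have := ler_distD (w s) (w t) (w 0); rewrite (distrC (w t) (w s)).
  move: step MsT; rewrite ler0_norm ?subr_le0 // (opprB s t) => step MsT.
  have : 0 <= (e - M * (t - s)) * (t - s) by apply: mulr_ge0; rewrite subr_ge0.
  have : 0 <= e * (t - s) by apply: mulr_ge0; rewrite ?subr_ge0 // ltW.
  nra.
Qed.

Lemma linear_scale {K : pzRingType} {U V : lmodType K} {f : U -> V} :
  (forall a u v, f (a *: u + v) = a *: f u + f v) ->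
  forall a u, f (a *: u) = a *: f u.
Proof.
move=> lin a u; have f0 : f 0 = 0.
  by apply: (addrI (f 0)); rewrite -{1}[f 0]scale1r -lin scale1r !addr0.
by have := lin a u 0; rewrite !addr0 f0 addr0.
Qed.

Section Derivative.
Context {R : realType} {H : completeNormedModType R}.
Context {C : set H} {F : H -> H} {F' : H -> H -> H}.
Hypotheses (convC : convex_set C) (dF : derivative_on C F F').

Lemma convex_segment {a b : H} {t : R} : C a -> C b -> 0 <= t -> t <= 1 ->
  C (a + t *: (b - a)).
Proof.
move=> Ca Cb t0 t1.
have := convC b a (Itv01 t0 t1) (mem_set Cb) (mem_set Ca); move/set_mem.
congr C; change (t *: b + (1 - t) *: a = a + t *: (b - a)).
by rewrite scalerBl scale1r scalerBr addrCA addrA.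
Qed.

Lemma derivative_along_segment {y0 y1 : H} {t : R} :
  C y0 -> C y1 -> 0 <= t -> t <= 1 ->
  forall e, 0 < e -> exists2 d, 0 < d & forall s, 0 <= s -> s <= 1 ->
    `|s - t| < d ->
    `|F (y0 + s *: (y1 - y0)) - F (y0 + t *: (y1 - y0))
       - (s - t) *: F' (y0 + t *: (y1 - y0)) (y1 - y0)| <= e * `|s - t|.
Proof.
move=> C0 C1 t0 t1 e e0.
set h := y1 - y0; pose z r := y0 + r *: h.
have Czt : C (z t) by exact: convex_segment.
have h1 : 0 < `|h| + 1 by rewrite ltr_wpDl.
have [lin _ diff] := dF _ Czt.
have [d d0 near_zt] := diff _ (divr_gt0 e0 h1).
exists (d / (`|h| + 1)); first exact: divr_gt0.
move=> s s0 s1 st_d.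
have zst : z s - z t = (s - t) *: h.
  by rewrite /z opprD addrACA subrr add0r scalerBl.
have dist_zst : `|z s - z t| = `|s - t| * `|h| by rewrite zst normrZ.
have Czs : C (z s) by exact: convex_segment.
have st0 := normr_ge0 (s - t); have h0 := normr_ge0 h.
have zs_near : `|z s - z t| < d.
  by move: st_d; rewrite dist_zst ltr_pdivlMr //; nra.
have := near_zt _ Czs zs_near.
rewrite dist_zst zst (linear_scale lin) => /le_trans; apply.
have -> : e / (`|h| + 1) * (`|s - t| * `|h|)
          = e * `|s - t| * (`|h| / (`|h| + 1)) by ring.
have : `|h| / (`|h| + 1) <= 1 by rewrite ler_pdivrMr // mul1r lerDl.
have := mulr_ge0 (ltW e0) st0; nra.
Qed.

Lemma lipschitz_derivative_taylor_le {L : R} {y0 y1 : H} :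
  deriv_lipschitz_on C F' L -> C y0 -> C y1 ->
  `|F y1 - F y0 - F' y0 (y1 - y0)| <= L / 2 * `|y1 - y0| ^+ 2.
Proof.
move=> lipF' C0 C1; set h := y1 - y0.
have := @first_order_remainder_le R H (fun t => F (y0 + t *: h))
  (fun t => F' (y0 + t *: h) h) (L * `|h| ^+ 2).
rewrite scale1r scale0r addr0 [y0 + h]addrC subrK mulrAC; apply.
  by move=> t t0 t1; exact: derivative_along_segment.
move=> t t0 t1; have := lipF' _ _ (convex_segment C0 C1 t0 t1) C0 h.
by rewrite [y0 + _]addrC addrK normrZ ger0_norm // => /le_trans; apply; nra.
Qed.

Lemma monotone_derivative_ge0 {ip : H -> H -> R} {y0 y1 : H} :
  is_inner_product ip -> monotone_on ip C F -> C y0 -> C y1 ->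
  0 <= ip (F' y0 (y1 - y0)) (y1 - y0).
Proof.
move=> hip monoF C0 C1; set h := y1 - y0.
apply/ler_addgt0Pr => e e0.
have h1 : 0 < `|h| + 1 by rewrite ltr_wpDl.
have [d d0 near_y0] :=
  derivative_along_segment C0 C1 (lexx 0) ler01 _ (divr_gt0 e0 h1).
pose s := Num.min 1 (d / 2).
have s0 : 0 < s by rewrite lt_min ltr01 divr_gt0.
have s1 : s <= 1 by rewrite ge_min lexx.
have sd : `|s - 0| < d.
  have : s <= d / 2 by rewrite ge_min lexx orbT.
  by rewrite subr0 gtr0_norm //; lra.
have := near_y0 s (ltW s0) s1 sd.
rewrite scale0r addr0 !subr0 gtr0_norm //.
set r := F (y0 + s *: h) - F y0 - s *: F' y0 h => r_small.
have mono := monoF _ _ (convex_segment C0 C1 (ltW s0) s1) C0.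
have zs : y0 + s *: h - y0 = s *: h by rewrite addrC addKr.
have Fzs : F (y0 + s *: h) - F y0 = r + s *: F' y0 h by rewrite subrK.
rewrite zs Fzs (ipDl hip) !(ipZl hip) !(ipZr hip) in mono.
have ip_rh : ip r h <= e * s.
  apply: le_trans (ip_le_normM hip r h) _.
  apply: le_trans (ler_wpM2r (normr_ge0 h) r_small) _.
  have -> : e / (`|h| + 1) * s * `|h| = e * s * (`|h| / (`|h| + 1)) by ring.
  rewrite ler_piMr ?mulr_ge0 ?(ltW e0) ?(ltW s0) //.
  by rewrite ler_pdivrMr // mul1r lerDl.
have : s * ip r h <= s * (e * s) by rewrite ler_wpM2l ?(ltW s0).
by rewrite -(pmulr_rge0 _ s0) -(pmulr_rge0 _ s0); nra.
Qed.

End Derivative.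

Lemma theta_hat_ge {R : realType} {sg theta p : R} :
  0 <= sg -> sg < 1 -> 0 <= p -> (1 - sg) * p <= theta ->
  sg * p + p ^+ 2 <= theta_hat sg theta.
Proof.
move=> sg0 sg1 p0 p_le; have sg1' : 0 < 1 - sg by rewrite subr_gt0.
have p_le' : p <= theta / (1 - sg) by rewrite ler_pdivlMr // mulrC.
have -> : theta_hat sg theta
          = sg * (theta / (1 - sg)) + (theta / (1 - sg)) ^+ 2.
  by rewrite /theta_hat; field; rewrite gt_eqF.
by rewrite lerD ?ler_wpM2l // lerXn2r // nnegrE (le_trans p0).
Qed.

Section ApproximateStep.
Context {R : realType} {H : completeNormedModType R} {ip : H -> H -> R}.
Context {C : set H} {F : H -> H} {F' : H -> H -> H}.
Hypotheses (hip : is_inner_product ip) (convC : convex_set C).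
Hypotheses (monoF : monotone_on ip C F) (dF : derivative_on C F F').

Lemma approx_step_le {sg l : R} {xp yp np yk nk : H} :
  0 <= l -> in_normal_cone ip C yp np -> in_normal_cone ip C yk nk ->
  `|l *: (linF F F' yp yk + nk) + yk - xp| <= sg * `|yk - yp| ->
  (1 - sg) * `|yk - yp| <= `|l *: (F yp + np) + yp - xp|.
Proof.
move=> l0 [Cyp np_normal] [Cyk nk_normal].
set h := yk - yp; set e := l *: _ + yk - xp; set v := l *: _ + yp - xp.
move=> e_small.
have nk_h : 0 <= ip nk h.
  by have := nk_normal _ Cyp; rewrite -opprB (ipNr hip); lra.
have np_h : ip np h <= 0 := np_normal _ Cyk.
have q0 : 0 <= ip (F' yp h) h :=
  monotone_derivative_ge0 convC dF hip monoF Cyp Cyk.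
have ip_e : ip e h
            = l * (ip (F yp) h + ip (F' yp h) h + ip nk h) + ip yk h - ip xp h.
  by rewrite /e /linF -/h !(ipBl hip, ipDl hip, ipZl hip).
have ip_v : ip v h = l * (ip (F yp) h + ip np h) + ip yp h - ip xp h.
  by rewrite /v !(ipBl hip, ipDl hip, ipZl hip).
have ip_h : ip yk h - ip yp h = `|h| ^+ 2 by rewrite -(ipBl hip) (ip_normE hip).
have lower : `|h| ^+ 2 <= ip (e - v) h.
  rewrite (ipBl hip) ip_e ip_v.
  have := mulr_ge0 l0 q0; have : 0 <= l * (ip nk h - ip np h).
    by rewrite mulr_ge0 // subr_ge0 (le_trans np_h).
  lra.
have upper : ip (e - v) h <= (sg * `|h| + `|v|) * `|h|.
  apply: le_trans (ip_le_normM hip _ _) (ler_wpM2r (normr_ge0 h) _).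
  by apply: le_trans (ler_normB _ _) _; rewrite lerD2r.
have [h0 | h_neq0] := eqVneq `|h| 0; first by rewrite h0 mulr0.
have h_gt0 : 0 < `|h| by rewrite lt_neqAle eq_sym h_neq0 normr_ge0.
by rewrite -(ler_pM2r h_gt0); nra.
Qed.

Lemma approx_residual_le {L sg l : R} {xp yp yk nk : H} :
  deriv_lipschitz_on C F' L -> 0 <= l -> C yp -> C yk ->
  `|l *: (linF F F' yp yk + nk) + yk - xp| <= sg * `|yk - yp| ->
  `|l *: (F yk + nk) + yk - xp|
    <= sg * `|yk - yp| + l * (L / 2 * `|yk - yp| ^+ 2).
Proof.
move=> lipF' l0 Cyp Cyk e_small.
set A := linF F F' yp yk.
have -> : l *: (F yk + nk) + yk - xp
          = l *: (A + nk) + yk - xp + l *: (F yk - A).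
  rewrite (addrAC (l *: (A + nk) + yk)) (addrAC (l *: (A + nk))) -scalerDr.
  by rewrite [A + nk + _]addrAC [A + _]addrC subrK.
apply: le_trans (ler_normD _ _) (lerD e_small _).
rewrite normrZ ger0_norm // ler_wpM2l // /A /linF opprD addrA.
exact: (lipschitz_derivative_taylor_le convC dF lipF' Cyp Cyk).
Qed.

Lemma approx_solution_theta_hat {L sg theta l : R} {xp yp np yk nk : H} :
  deriv_lipschitz_on C F' L -> 0 <= L -> 0 <= sg -> sg < 1 -> 0 <= l ->
  in_normal_cone ip C yp np -> in_normal_cone ip C yk nk ->
  `|l *: (linF F F' yp yk + nk) + yk - xp| <= sg * `|yk - yp| ->
  l * L / 2 * `|l *: (F yp + np) + yp - xp| <= theta ->
  l * L / 2 * `|l *: (F yk + nk) + yk - xp| <= theta_hat sg theta.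
Proof.
move=> lipF' L0 sg0 sg1 l0 cone_p cone_k approx prev.
have [[Cyp _] [Cyk _]] := (cone_p, cone_k).
have lL0 : 0 <= l * L / 2 by rewrite !mulr_ge0.
have residual := ler_wpM2l lL0 (approx_residual_le lipF' l0 Cyp Cyk approx).
have step := ler_wpM2l lL0 (approx_step_le l0 cone_p cone_k approx).
apply: le_trans residual _; set d := `|yk - yp|.
have -> : l * L / 2 * (sg * d + l * (L / 2 * d ^+ 2))
          = sg * (l * L / 2 * d) + (l * L / 2 * d) ^+ 2 by ring.
apply: theta_hat_ge => //; first exact: mulr_ge0 lL0 (normr_ge0 _).
have -> : (1 - sg) * (l * L / 2 * d) = l * L / 2 * ((1 - sg) * d) by ring.
exact: le_trans step prev.
Qed.

End ApproximateStep.

Lemma algorithm2_normal_cone {R : realType} {H : completeNormedModType R}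
    {ip : H -> H -> R} {C : set H} {F : H -> H} {F' : H -> H -> H}
    {L sg theta eta : R} {x y nu : nat -> H} {lam : nat -> R} :
  is_inner_product ip -> algorithm2 ip C F F' L sg theta eta x y nu lam ->
  forall j, in_normal_cone ip C (y j) (nu j).
Proof.
move=> hip [[Cx0 [y0E [nu0E _]]] _ ystep _]; elim=> [|j IHj].
  by rewrite y0E nu0E; split=> // z _; rewrite (ip0l hip).
by have := ystep j.+1 isT; case: ifP => _ [] // -> ->.
Qed.

Theorem proposition4p2 (R : realType) (H : completeNormedModType R)
  (ip : H -> H -> R) (C : set H) (F : H -> H) (F' : H -> H -> H)
  (L sigma_hat theta eta : R) (x y nu : nat -> H) (lam : nat -> R) :
  is_inner_product ip ->
  C !=set0 -> closed C -> convex_set C ->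
  monotone_on ip C F -> derivative_on C F F' -> deriv_continuous_on C F' ->
  0 < L -> deriv_lipschitz_on C F' L ->
  (exists2 xs, C xs & in_normal_cone ip C xs (- F xs)) ->
  0 <= sigma_hat -> sigma_hat < 1 / 2 ->
  0 < theta -> theta < (1 - sigma_hat) * (1 - 2 * sigma_hat) ->
  2 * theta_hat sigma_hat theta / L < eta ->
  algorithm2 ip C F F' L sigma_hat theta eta x y nu lam ->
  forall k : nat, (1 <= k)%N ->
  (* (y_k, nu_k) computed in the approximate-solution branch *)
  theta_hat sigma_hat theta <
    lam k * L / 2 * `|lam k *: (F (y k.-1) + nu k.-1) + y k.-1 - x k.-1| ->
  lam k * L / 2 * `|lam k *: (F (y k.-1) + nu k.-1) + y k.-1 - x k.-1|
    <= theta ->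
  lam k * L / 2 * `|lam k *: (F (y k) + nu k) + y k - x k.-1|
    <= theta_hat sigma_hat theta.
Proof.
move=> hip _ _ convC monoF dF _ L_gt0 lipF' _ sg0 sg_half theta0 _ _ alg k k1.
move=> above_theta_hat below_theta.
have sg1 : sigma_hat < 1 by lra.
have cone_prev := algorithm2_normal_cone hip alg k.-1.
have [_ _ ystep _] := alg.
have := ystep k k1; rewrite leNgt above_theta_hat /= => -[cone_k approx].
have theta_hat0 : 0 <= theta_hat sigma_hat theta.
  have p0 : (1 - sigma_hat) * 0 <= theta by rewrite mulr0 ltW.
  by have := theta_hat_ge sg0 sg1 (lexx 0) p0; rewrite mulr0 expr0n addr0.
have lam0 : 0 <= lam k.
  rewrite leNgt; apply/negP => lam_lt0; move: above_theta_hat; apply/negP.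
  rewrite -leNgt (le_trans _ theta_hat0) // mulr_le0_ge0 //; nra.
exact: (approx_solution_theta_hat hip convC monoF dF lipF' (ltW L_gt0)
  sg0 sg1 lam0 cone_prev cone_k approx below_theta).
Qed.
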